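(* Let $d\ge 2$. Let $\mathfrak{V}=\{V_0,\dots,V_{d-1}\}$ and $\mathfrak{W}=\{W_0,\dots,W_{d-1}\}$ be two bases of the same $d$-dimensional subspace $\mathcal{S}$ of $\mathcal{L}(\mathbb{C}^d)$. Assume that each basis consists of unitary operators and is orthogonal with respect to the Hilbert–Schmidt inner product: $$\operatorname{Tr}(V_i^\dagger V_j)=d\,\delta_{ij},\qquad \operatorname{Tr}(W_i^\dagger W_j)=d\,\delta_{ij}.$$ Suppose that for every pair $m,n\in\{0,\dots,d-1\}$ the pair $V_n,W_m$ saturates the maximal bound. Then $\mathfrak{V}$ and $\mathfrak{W}$ are mutually unbiased, i.e. $$|\operatorname{Tr}(V_n^\dagger W_m)|=\sqrt d\quad\text{for all } m,n.$$
   Context: For unitaries $V,W$ on $\mathbb{C}^d$ and an orthonormal basis $\{|\chi_i\rangle\}$ of $\mathbb{C}^d$, the entropic uncertainty bound for testing $V$ and $W$ with measurement $\{|\chi_i\rangle\langle\chi_i|\}$ is $-\log\max_{i,j}|\langle\chi_i|WV^\dagger|\chi_j\rangle|^2$. The pair $V,W$ saturates the maximal bound if there is some tester, i.e. some orthonormal basis $\{|\chi_i\rangle\}_{i=1}^d$ (depending on the pair), for which this bound equals $\log d$. Equivalently, the bases $\{|\chi_i\rangle\}$ and $\{WV^\dagger|\chi_j\rangle\}$ are mutually unbiased: $$|\langle\chi_i|WV^\dagger|\chi_j\rangle|=1/\sqrt d\quad\text{for all } i,j.$$ *)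

From HB Require Import structures.
From mathcomp Require Import all_boot all_order all_algebra.
Set Implicit Arguments. Unset Strict Implicit. Unset Printing Implicit Defensive.
Import Order.TTheory GRing.Theory Num.Theory.
Local Open Scope ring_scope.

(* Complex scalars: an arbitrary numClosedFieldType C (e.g. algC). *)

Definition adj (C : numClosedFieldType) (m n : nat) (A : 'M[C]_(m, n)) : 'M[C]_(n, m) :=
  (map_mx Num.conj A)^T.

Definition unitary (C : numClosedFieldType) (d : nat) (A : 'M[C]_d) : Prop :=
  adj A *m A = 1%:M /\ A *m adj A = 1%:M.

Definition orthonormal_basis (C : numClosedFieldType) (d : nat) (chi : 'I_d -> 'cV[C]_d) : Prop :=
  forall i j, (adj (chi i) *m chi j) 0 0 = (i == j)%:R.

Definition braket (C : numClosedFieldType) (d : nat) (chi : 'I_d -> 'cV[C]_d) (M : 'M[C]_d) i j : C :=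
  (adj (chi i) *m M *m chi j) 0 0.

(* The entropic bound -log max_{i,j} |<chi_i|W V^dagger|chi_j>|^2 equals log d,
   i.e. max_{i,j} |<chi_i|W V^dagger|chi_j>|^2 = 1/d (written out as the maximum). *)
Definition saturates_max_bound (C : numClosedFieldType) (d : nat) (V W : 'M[C]_d) : Prop :=
  exists chi : 'I_d -> 'cV[C]_d,
    orthonormal_basis chi /\
    (forall i j, `|braket chi (W *m adj V) i j| ^+ 2 <= (d%:R)^-1) /\
    (exists i j, `|braket chi (W *m adj V) i j| ^+ 2 = (d%:R)^-1).

(* The subspace of L(C^d) spanned by a family, as the row space of the matrix
   whose rows are the vectorized operators. *)
Definition span_mx (C : numClosedFieldType) (d : nat) (V : 'I_d -> 'M[C]_d) : 'M[C]_(d, d * d) :=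
  \matrix_(i < d) mxvec (V i).

From HB Require Import structures.
From mathcomp Require Import all_boot all_order all_algebra.
Import Order.TTheory GRing.Theory Num.Theory.
Local Open Scope ring_scope.

(* Fix m and write t_k := Tr(V_k^dagger W_m).
   1. Since W_m lies in the span of the V's, W_m = sum_k c_k V_k, and the
      orthogonality Tr(V_i^dagger V_j) = d delta_ij gives t_k = d c_k.  A
      Parseval identity follows: sum_k |t_k|^2 = d Tr(W_m^dagger W_m) = d^2.
   2. If V, W saturate the maximal bound with tester chi, then computing the
      trace in the basis chi gives |Tr(V^dagger W)| = |sum_i <chi_i|W V^dagger|chi_i>|
      <= d / sqrt d, i.e. |t_k|^2 <= d for every k.
   3. d nonnegative-deficit terms |t_k|^2 <= d summing to d * d must all be
      equal to d, hence |t_n| = sqrt d. *)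

Section HilbertSchmidt.
Context {C : numClosedFieldType} {d : nat}.

Lemma mxtrace_onb (U : 'M[C]_d) {chi : 'I_d -> 'cV[C]_d} :
  orthonormal_basis chi -> \tr U = \sum_i braket chi U i i.
Proof.
move=> hchi.
pose X : 'M[C]_d := \matrix_(i, j) chi j i 0.
have X_isometry : adj X *m X = 1%:M.
  apply/matrixP => i j; rewrite [RHS]mxE -hchi !mxE.
  by apply: eq_bigr => k _; rewrite !mxE.
have -> : \tr U = \tr (adj X *m U *m X).
  by rewrite mxtrace_mulC mulmxA (mulmx1C X_isometry) mul1mx.
rewrite /mxtrace; apply: eq_bigr => i _; rewrite /braket !mxE.
apply: eq_bigr => k _; rewrite !mxE; congr (_ * _).
by apply: eq_bigr => l _; rewrite !mxE.
Qed.

Lemma mxtrace_adjC (A B : 'M[C]_d) :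
  \tr (adj A *m B) = (\tr (adj B *m A))^*.
Proof.
rewrite /mxtrace rmorph_sum; apply: eq_bigr => i _; rewrite !mxE rmorph_sum.
by apply: eq_bigr => k _; rewrite !mxE rmorphM /= conjCK mulrC.
Qed.

Lemma mxtrace_adjZr (A B : 'M[C]_d) (x : C) :
  \tr (adj A *m (x *: B)) = x * \tr (adj A *m B).
Proof. by rewrite -scalemxAr linearZ. Qed.

Lemma span_mx_expand (V : 'I_d -> 'M[C]_d) (A : 'M[C]_d) :
  (mxvec A <= span_mx V)%MS -> exists c : 'I_d -> C, A = \sum_k c k *: V k.
Proof.
case/submxP => c hc; exists (fun k => c 0 k).
apply: (can_inj mxvecK); rewrite hc mulmx_sum_row linear_sum.
by apply: eq_bigr => k _; rewrite linearZ /= rowK.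
Qed.

Lemma parseval_orthogonal {V : 'I_d -> 'M[C]_d} {a : C} {A : 'M[C]_d} :
  (forall i j, \tr (adj (V i) *m V j) = a * (i == j)%:R) ->
  (mxvec A <= span_mx V)%MS ->
  \sum_k `|\tr (adj (V k) *m A)| ^+ 2 = a * \tr (adj A *m A).
Proof.
move=> hVo /span_mx_expand [c defA].
have coef k : \tr (adj (V k) *m A) = a * c k.
  rewrite defA mulmx_sumr linear_sum /= (bigD1 k) //= big1 => [|j hj].
    by rewrite mxtrace_adjZr hVo eqxx mulr1 addr0 mulrC.
  by rewrite mxtrace_adjZr hVo eq_sym (negbTE hj) !mulr0.
have normA : \tr (adj A *m A) = \sum_k c k * (\tr (adj (V k) *m A))^*.
  rewrite [X in \tr (_ *m X) = _]defA mulmx_sumr linear_sum /=.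
  by apply: eq_bigr => k _; rewrite mxtrace_adjZr mxtrace_adjC.
rewrite normA mulr_sumr; apply: eq_bigr => k _.
by rewrite normCK coef mulrA.
Qed.

Lemma saturated_trace_bound {V W : 'M[C]_d} :
  (0 < d)%N -> saturates_max_bound V W -> `|\tr (adj V *m W)| ^+ 2 <= d%:R.
Proof.
move=> d_gt0 [chi [hchi [hle _]]].
rewrite mxtrace_mulC (mxtrace_onb _ hchi).
set s := sqrtC (d%:R^-1 : C).
have s_ge0 : 0 <= s by rewrite sqrtC_ge0 invr_ge0 ler0n.
have diag_le i : `|braket chi (W *m adj V) i i| <= s.
  by rewrite -(@ler_pXn2r _ 2) // ?nnegrE ?normr_ge0 // sqrtCK hle.
have sum_le : `|\sum_i braket chi (W *m adj V) i i| <= s *+ d.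
  apply: le_trans (ler_norm_sum _ _ _) _.
  apply: le_trans (ler_sum _ (fun i _ => diag_le i)) _.
  by rewrite sumr_const card_ord.
rewrite -(@ler_pXn2r _ 2) ?nnegrE ?normr_ge0 ?mulrn_wge0 // in sum_le.
apply: le_trans sum_le _.
have d_neq0 : (d%:R : C) != 0 by rewrite pnatr_eq0 -lt0n.
by rewrite -[s *+ d]mulr_natl exprMn sqrtCK expr2 -mulrA mulfV // mulr1.
Qed.

End HilbertSchmidt.

Lemma bounded_sum_eq {R : numDomainType} {n : nat} {F : 'I_n -> R} {b : R} :
  (forall k, F k <= b) -> \sum_k F k = b *+ n -> forall k, F k = b.
Proof.
move=> hle hsum k; apply/eqP; rewrite eq_sym -subr_eq0; apply/eqP.
have deficit0 : \sum_k (b - F k) = 0.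
  by rewrite sumrB sumr_const card_ord hsum subrr.
by apply: (psumr_eq0P _ deficit0) => // j _; rewrite subr_ge0.
Qed.

Theorem proposition2 (C : numClosedFieldType) (d : nat) (hd : (2 <= d)%N)
    (V W : 'I_d -> 'M[C]_d)
    (hspan : (span_mx V == span_mx W)%MS)
    (hVu : forall i, unitary (V i)) (hWu : forall i, unitary (W i))
    (hVo : forall i j, \tr (adj (V i) *m V j) = d%:R * (i == j)%:R)
    (hWo : forall i j, \tr (adj (W i) *m W j) = d%:R * (i == j)%:R)
    (hsat : forall m n, saturates_max_bound (V n) (W m)) :
  forall m n, `|\tr (adj (V n) *m W m)| = sqrtC d%:R.
Proof.
move=> m n.
have d_gt0 : (0 < d)%N by apply: leq_trans hd.
have Wm_in_span : (mxvec (W m) <= span_mx V)%MS.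
  case/andP: hspan => _ /(submx_trans _); apply.
  by rewrite -(rowK (fun i => mxvec (W i)) m) row_sub.
have parseval := parseval_orthogonal hVo Wm_in_span.
rewrite hWo eqxx mulr1 mulr_natr in parseval.
have each_le k := saturated_trace_bound d_gt0 (hsat m k).
have sq_eq := bounded_sum_eq each_le parseval n.
by rewrite -sq_eq sqrCK ?normr_ge0.
Qed.
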